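(* Let $a\in[0,1)$, $q,t\in(0,1)$, $\nu>0$. For any $i,j\in\{0,1\}$ and $n_1,n_2\in\mathbb{N}$, $$\sum_{m_1,m_2\ge0}c_{m_1,m_2}\,Z^{\mathrm{left}}_a(i,j;m_1,m_2;n_1,n_2)=\sum_{m_1,m_2\ge0}c_{m_1,m_2}\,Z^{\mathrm{right}}_a(i,j;m_1,m_2;n_1,n_2),$$ where $c_{m_1,m_2}=h_{m_2}(-t;q)(-t\nu)^{m_1}h_{m_1}(-\frac{1}{\nu^2t};q)$ (only finitely many terms are nonzero).
   Context: Rogers–Szegő polynomials $h_m(x;q)=\sum_{k=0}^m\binom mk_qx^k$. Deformed boson vertices: a vertex has horizontal edges (left, right) carrying $0$ or $1$ arrow, and vertical edges (bottom, top) carrying any number $\ge0$ of arrows, with arrow conservation (left + bottom = right + top). With $m$ arrows entering from below, the ''black'' weights with rapidity $a$ are: (left 0, right 0, top $m$): $1$; (left 0, right 1, top $m-1$): $a$; (left 1, right 0, top $m+1$): $1-q^{m+1}$; (left 1, right 1, top $m$): $a$. The ''red'' weights with rapidity $a$ are: (0,0): $a$; (0,1): $1$; (1,0): $a(1-q^{m+1})$; (1,1): $1$. A boundary vertex lies on a horizontal edge, has one input and one output horizontal state, and weights with $D=(1-a\nu t)(1+a/\nu)$: (in 0, out 0): $\frac{a\nu^{-1}(1-t\nu^2)+(1-t)}{D}$; (in 0, out 1): $\frac{t(1-a^2)}{D}$; (in 1, out 0): $\frac{1-a^2}{D}$; (in 1, out 1): $\frac{a\nu^{-1}(1-t\nu^2)+a^2(1-t)}{D}$.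 $Z^{\mathrm{left}}_a(i,j;m_1,m_2;n_1,n_2)$ is the sum over internal horizontal edge states of the product of weights of the row consisting, from left to right, of: a horizontal input in state $i$, a boundary vertex, a black vertex with $m_2$ arrows entering from below and $n_2$ exiting at top, a black vertex with $m_1$ below and $n_1$ on top, and horizontal output in state $j$. $Z^{\mathrm{right}}_a$ is the same but with the row consisting of: input $i$, a red vertex $(m_2$ below, $n_2$ top$)$, a red vertex $(m_1,n_1)$, then a boundary vertex, output $j$. *)

From mathcomp Require Import all_boot all_order all_algebra.
Set Implicit Arguments. Unset Strict Implicit. Unset Printing Implicit Defensive.
Import Order.TTheory GRing.Theory Num.Theory.
Local Open Scope ring_scope.

Section Defs.
Variable R : realFieldType.

Definition qfact (q : R) (n : nat) : R := \prod_(i < n) (1 - q ^+ i.+1).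

Definition qbinom (q : R) (m k : nat) : R :=
  if (k <= m)%N then qfact q m / (qfact q k * qfact q (m - k)) else 0.

Definition RS (m : nat) (x q : R) : R :=
  \sum_(k < m.+1) qbinom q m k * x ^+ k.

(* Black vertex: m arrows below, horizontal left l / right r, top arrows;
   weight 0 unless arrow conservation l + m = r + top holds. *)
Definition black_w (a q : R) (m : nat) (l r : bool) (top : nat) : R :=
  if (top + r == m + l)%N then
    match l, r with
    | false, false => 1
    | false, true => a
    | true, false => 1 - q ^+ m.+1
    | true, true => a
    end
  else 0.

Definition red_w (a q : R) (m : nat) (l r : bool) (top : nat) : R :=
  if (top + r == m + l)%N then
    match l, r with
    | false, false => a
    | false, true => 1
    | true, false => a * (1 - q ^+ m.+1)
    | true, true => 1
    end
  else 0.

Definition bdry_w (a t nu : R) (i j : bool) : R :=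
  let D := (1 - a * nu * t) * (1 + a / nu) in
  match i, j with
  | false, false => (a / nu * (1 - t * nu ^+ 2) + (1 - t)) / D
  | false, true => t * (1 - a ^+ 2) / D
  | true, false => (1 - a ^+ 2) / D
  | true, true => (a / nu * (1 - t * nu ^+ 2) + a ^+ 2 * (1 - t)) / D
  end.

(* Row: input i, boundary vertex, black (m2,n2), black (m1,n1), output j. *)
Definition Zleft (a q t nu : R) (i j : bool) (m1 m2 n1 n2 : nat) : R :=
  \sum_(k : bool) \sum_(l : bool)
     bdry_w a t nu i k * black_w a q m2 k l n2 * black_w a q m1 l j n1.

(* Row: input i, red (m2,n2), red (m1,n1), boundary vertex, output j. *)
Definition Zright (a q t nu : R) (i j : bool) (m1 m2 n1 n2 : nat) : R :=
  \sum_(k : bool) \sum_(l : bool)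
     red_w a q m2 i k n2 * red_w a q m1 k l n1 * bdry_w a t nu l j.

Definition coefc (q t nu : R) (m1 m2 : nat) : R :=
  RS m2 (- t) q * (- (t * nu)) ^+ m1 * RS m1 (- (1 / (nu ^+ 2 * t))) q.

End Defs.

From mathcomp Require Import all_boot all_order all_algebra.
From mathcomp Require Import ring zify.
Import Order.TTheory GRing.Theory Num.Theory.
Local Open Scope ring_scope.
Set Implicit Arguments. Unset Strict Implicit.

(* The coefficient c_(m1,m2) is a product coef2 m2 * coef1 m1 of a
   Rogers-Szego factor in m2 and one in m1.  Both rows consist of two
   columns (vertices) and a boundary vertex, so after summing over the
   incoming arrows m1, m2 each side factors into column sums
   sum_m coef m * W(m, l, r, n) (row_factor).  Vertex weights conserve
   arrows, hence a column sum selects the single admissible m (column_sum)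
   and is an explicit multiple of coef(n-1), coef(n) or coef(n+1)
   (black_column, red_column); the same conservation shows that both
   series are supported on m1 <= n1+1, m2 <= n2+1.  What remains, in each
   of the finitely many cases for i, j and n1, n2 = 0 or positive, is a
   rational identity, which follows from the three-term recurrence
   h_(n+2) = (1+x) h_(n+1) - x (1-q^(n+1)) h_n of the Rogers-Szego
   polynomials (RS_rec), itself derived from the q-Pascal and absorption
   rules for Gaussian binomials. *)

Section QBinomial.
Variables (R : realFieldType) (q : R).
Hypothesis q_not_root : forall n, q ^+ n.+1 != 1.

Lemma qfactor_neq0 n : 1 - q ^+ n.+1 != 0.
Proof. by rewrite subr_eq0 eq_sym. Qed.

Lemma qfact0 : qfact q 0 = 1.
Proof. by rewrite /qfact big_ord0. Qed.

Lemma qfactS n : qfact q n.+1 = qfact q n * (1 - q ^+ n.+1).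
Proof. by rewrite /qfact big_ord_recr. Qed.

Lemma qfact_neq0 n : qfact q n != 0.
Proof.
elim: n => [|n IHn]; first by rewrite qfact0 oner_eq0.
by rewrite qfactS mulf_neq0 // qfactor_neq0.
Qed.

Lemma qbinom0 n : qbinom q n 0 = 1.
Proof. by rewrite /qbinom subn0 qfact0 mul1r divff // qfact_neq0. Qed.

Lemma qbinomnn n : qbinom q n n = 1.
Proof. by rewrite /qbinom leqnn subnn qfact0 mulr1 divff // qfact_neq0. Qed.

Lemma qbinom_gt n k : (n < k)%N -> qbinom q n k = 0.
Proof. by move=> lt_nk; rewrite /qbinom leqNgt lt_nk. Qed.

Lemma qpascal n k :
  qbinom q n.+1 k.+1 = qbinom q n k + q ^+ k.+1 * qbinom q n k.+1.
Proof.
case: (ltngtP k n) => [lt_kn | lt_nk | ->]; last first.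
- by rewrite !qbinomnn qbinom_gt // mulr0 addr0.
- by rewrite !qbinom_gt ?mulr0 ?addr0 ?ltnS // ltnW.
have [d ->] : exists d, n = (k + d).+1 by exists (n - k.+1)%N; lia.
rewrite /qbinom ifT; last by lia.
rewrite ifT; last by lia.
rewrite ifT; last by lia.
have -> : ((k + d).+2 - k.+1 = d.+1)%N by lia.
have -> : ((k + d).+1 - k = d.+1)%N by lia.
have -> : ((k + d).+1 - k.+1 = d)%N by lia.
rewrite !qfactS.
have -> : q ^+ (k + d).+2 = q ^+ k.+1 * q ^+ d.+1 by rewrite -exprD; congr (_ ^+ _); lia.
by field; rewrite !qfact_neq0 !qfactor_neq0.
Qed.

Lemma qbinom_absorb n k :
  (1 - q ^+ k.+1) * qbinom q n.+1 k.+1 = (1 - q ^+ n.+1) * qbinom q n k.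
Proof.
case: (leqP k n) => [le_kn | lt_nk]; last by rewrite !qbinom_gt ?mulr0.
rewrite /qbinom le_kn ltnS le_kn subSS !qfactS.
by field; rewrite !qfact_neq0 qfactor_neq0.
Qed.

Lemma RS_nat y n : RS n y q = \sum_(0 <= k < n.+1) qbinom q n k * y ^+ k.
Proof. by rewrite /RS big_mkord. Qed.

Lemma RS0 y : RS 0 y q = 1.
Proof. by rewrite /RS big_ord1 qbinomnn mulr1. Qed.

Variable x : R.

Lemma RS_pascal n : RS n.+1 x q = x * RS n x q + RS n (q * x) q.
Proof.
rewrite !RS_nat big_nat_recl // qbinom0 expr0 mulr1.
under eq_bigr do rewrite qpascal mulrDl.
rewrite big_split /= addrCA; congr (_ + _).
  by rewrite big_distrr; apply: eq_bigr => k _; rewrite exprS mulrCA.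
rewrite big_nat_recr //= qbinom_gt // mulr0 mul0r addr0.
rewrite big_nat_recl // qbinom0 !expr0 mulr1; congr (_ + _).
by apply: eq_bigr => k _; rewrite exprMn mulrA [_ * qbinom _ _ _]mulrC.
Qed.

Lemma RS_absorb n :
  RS n.+1 (q * x) q = RS n.+1 x q - (1 - q ^+ n.+1) * x * RS n x q.
Proof.
suff <- : RS n.+1 x q - RS n.+1 (q * x) q = (1 - q ^+ n.+1) * x * RS n x q.
  by ring.
rewrite !RS_nat -sumrB big_nat_recl // !expr0 subrr add0r big_distrr /=.
apply: eq_bigr => k _.
transitivity ((1 - q ^+ k.+1) * qbinom q n.+1 k.+1 * x ^+ k.+1).
  by rewrite exprMn; ring.
by rewrite qbinom_absorb [x ^+ k.+1]exprS; ring.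
Qed.

Lemma RS_rec n :
  RS n.+2 x q = (1 + x) * RS n.+1 x q - x * (1 - q ^+ n.+1) * RS n x q.
Proof. rewrite RS_pascal RS_absorb; ring. Qed.

Lemma RS1 : RS 1 x q = 1 + x.
Proof. by rewrite RS_pascal !RS0; ring. Qed.

End QBinomial.

Definition conserving (R : realFieldType)
    (W : nat -> bool -> bool -> nat -> R) : Prop :=
  forall m l r n, W m l r n != 0 -> (n + r = m + l)%N.

Section Columns.
Variable R : realFieldType.

Lemma black_conserving a q : conserving (black_w (R:=R) a q).
Proof. by move=> m l r n; rewrite /black_w; case: ifP => [/eqP | _]; rewrite ?eqxx. Qed.

Lemma red_conserving a q : conserving (red_w (R:=R) a q).
Proof. by move=> m l r n; rewrite /red_w; case: ifP => [/eqP | _]; rewrite ?eqxx. Qed.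

Variable W : nat -> bool -> bool -> nat -> R.
Hypothesis W_conserving : conserving W.

Lemma conserving_gt m l r n : (n.+1 < m)%N -> W m l r n = 0.
Proof.
move=> lt_nm; apply/eqP; apply: contraTT lt_nm => /W_conserving.
by case: l; case: r => /=; lia.
Qed.

Lemma column_sum (F : nat -> R) n l r :
  \sum_(m < n.+2) F m * W m l r n =
  if (l <= n + r)%N then F (n + r - l)%N * W (n + r - l)%N l r n else 0.
Proof.
case: leqP => [le_l | lt_l].
  have lt_m0 : (n + r - l < n.+2)%N by case: l r {le_l} => [] [] /=; lia.
  rewrite (bigD1 (Ordinal lt_m0)) //= big1 ?addr0 // => m /eqP ne_m.
  have [-> | /W_conserving eq_m] := eqVneq (W m l r n) 0; first by rewrite mulr0.
  by case: ne_m; apply: val_inj => /=; lia.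
apply: big1 => m _.
have [-> | /W_conserving] := eqVneq (W m l r n) 0; [by rewrite mulr0 | lia].
Qed.

End Columns.

Section ConcreteColumns.
Variables (R : realFieldType) (a q : R) (F : nat -> R).

Lemma black_column n l r :
  \sum_(m < n.+2) F m * black_w a q m l r n =
  match l, r with
  | false, false => F n
  | false, true => F n.+1 * a
  | true, true => F n * a
  | true, false => if n is n'.+1 then F n' * (1 - q ^+ n'.+1) else 0
  end.
Proof.
rewrite column_sum; last exact: black_conserving.
by case: l r => [] []; case: n => [|n];
  rewrite /black_w ?addn0 ?addn1 ?subn0 ?subn1 //= ?eqxx ?mulr1.
Qed.

Lemma red_column n l r :
  \sum_(m < n.+2) F m * red_w a q m l r n =
  match l, r with
  | false, false => F n * a
  | false, true => F n.+1
  | true, true => F n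
  | true, false => if n is n'.+1 then F n' * (a * (1 - q ^+ n'.+1)) else 0
  end.
Proof.
rewrite column_sum; last exact: red_conserving.
by case: l r => [] []; case: n => [|n];
  rewrite /red_w ?addn0 ?addn1 ?subn0 ?subn1 //= ?eqxx ?mulr1.
Qed.

End ConcreteColumns.

Definition coef2 (R : realFieldType) (q t : R) (m : nat) : R := RS m (- t) q.

Definition coef1 (R : realFieldType) (q t nu : R) (m : nat) : R :=
  (- (t * nu)) ^+ m * RS m (- (1 / (nu ^+ 2 * t))) q.

Lemma coefc_split (R : realFieldType) (q t nu : R) m1 m2 :
  coefc q t nu m1 m2 = coef2 q t m2 * coef1 q t nu m1.
Proof. by rewrite /coefc mulrA. Qed.

Section RowFactor.
Variables (R : realFieldType) (N1 N2 : nat) (f g : nat -> R).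

Lemma mulr_sum2 (x : R) (A : 'I_N2 -> R) (B : 'I_N1 -> R) :
  x * (\sum_(m2 < N2) A m2) * (\sum_(m1 < N1) B m1) =
  \sum_(m1 < N1) \sum_(m2 < N2) x * A m2 * B m1.
Proof.
rewrite big_distrr; apply: eq_bigr => m1 _.
by rewrite big_distrr big_distrl; apply: eq_bigr => m2 _.
Qed.

Lemma row_factor (X : bool -> bool -> R) (Y Z : nat -> bool -> bool -> R) :
  \sum_(m1 < N1) \sum_(m2 < N2)
     f m2 * g m1 * (\sum_(k : bool) \sum_(l : bool) X k l * Y m2 k l * Z m1 k l) =
  \sum_(k : bool) \sum_(l : bool)
     X k l * (\sum_(m2 < N2) f m2 * Y m2 k l) * (\sum_(m1 < N1) g m1 * Z m1 k l).
Proof.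
rewrite !big_bool /= !mulr_sum2 -!big_split /=; apply: eq_bigr => m1 _.
by rewrite -!big_split /=; apply: eq_bigr => m2 _; rewrite !big_bool /=; ring.
Qed.

End RowFactor.

Section Rows.
Variables (R : realFieldType) (a q t nu : R) (i j : bool) (n1 n2 : nat).

Lemma Zleft_out m1 m2 :
  (n1.+1 < m1)%N || (n2.+1 < m2)%N -> Zleft a q t nu i j m1 m2 n1 n2 = 0.
Proof.
move=> /orP [] lt_m; apply: big1 => k _; apply: big1 => l _.
  by rewrite (conserving_gt (@black_conserving R a q) _ _ lt_m) mulr0.
by rewrite (conserving_gt (@black_conserving R a q) _ _ lt_m) !(mulr0, mul0r).
Qed.

Lemma Zright_out m1 m2 :
  (n1.+1 < m1)%N || (n2.+1 < m2)%N -> Zright a q t nu i j m1 m2 n1 n2 = 0.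
Proof.
move=> /orP [] lt_m; apply: big1 => k _; apply: big1 => l _.
  by rewrite (conserving_gt (@red_conserving R a q) _ _ lt_m) !(mulr0, mul0r).
by rewrite (conserving_gt (@red_conserving R a q) _ _ lt_m) !(mulr0, mul0r).
Qed.

Lemma Zleft_factor :
  \sum_(m1 < n1.+2) \sum_(m2 < n2.+2)
     coefc q t nu m1 m2 * Zleft a q t nu i j m1 m2 n1 n2 =
  \sum_(k : bool) \sum_(l : bool) bdry_w a t nu i k *
     (\sum_(m2 < n2.+2) coef2 q t m2 * black_w a q m2 k l n2) *
     (\sum_(m1 < n1.+2) coef1 q t nu m1 * black_w a q m1 l j n1).
Proof.
rewrite -(row_factor _ _ _ _ (fun k l => bdry_w a t nu i k)
  (fun m2 k l => black_w a q m2 k l n2) (fun m1 k l => black_w a q m1 l j n1)).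
by apply: eq_bigr => m1 _; apply: eq_bigr => m2 _; rewrite coefc_split.
Qed.

Lemma Zright_factor :
  \sum_(m1 < n1.+2) \sum_(m2 < n2.+2)
     coefc q t nu m1 m2 * Zright a q t nu i j m1 m2 n1 n2 =
  \sum_(k : bool) \sum_(l : bool) bdry_w a t nu l j *
     (\sum_(m2 < n2.+2) coef2 q t m2 * red_w a q m2 i k n2) *
     (\sum_(m1 < n1.+2) coef1 q t nu m1 * red_w a q m1 k l n1).
Proof.
rewrite -(row_factor _ _ _ _ (fun k l => bdry_w a t nu l j)
  (fun m2 k l => red_w a q m2 i k n2) (fun m1 k l => red_w a q m1 k l n1)).
apply: eq_bigr => m1 _; apply: eq_bigr => m2 _; rewrite coefc_split /Zright.
by congr (_ * _); apply: eq_bigr => k _; apply: eq_bigr => l _; rewrite mulrC mulrA.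
Qed.

(* The local identity behind the lemma: after the column sums are
   evaluated, the two sides agree by the three-term recurrence of the
   Rogers-Szego polynomials; the boundary normalisation 1/D is arbitrary. *)
Lemma boundary_exchange :
  (forall n, q ^+ n.+1 != 1) -> t != 0 -> nu != 0 ->
  \sum_(k : bool) \sum_(l : bool) bdry_w a t nu i k *
     (\sum_(m2 < n2.+2) coef2 q t m2 * black_w a q m2 k l n2) *
     (\sum_(m1 < n1.+2) coef1 q t nu m1 * black_w a q m1 l j n1) =
  \sum_(k : bool) \sum_(l : bool) bdry_w a t nu l j *
     (\sum_(m2 < n2.+2) coef2 q t m2 * red_w a q m2 i k n2) *
     (\sum_(m1 < n1.+2) coef1 q t nu m1 * red_w a q m1 k l n1).
Proof.
move=> q_not_root t_neq0 nu_neq0.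
rewrite !big_bool /= !black_column !red_column /coef1 /coef2 /bdry_w.
case: i j n1 n2 => [] [] [|p1] [|p2];
  rewrite ?RS_rec ?RS1 ?RS0 // !exprS ?expr0;
  move: ((1 - a * nu * t) * (1 + a / nu))^-1 => z;
  by field; rewrite t_neq0 nu_neq0.
Qed.

End Rows.

(* Both series over m1, m2 >= 0 have support in m1 <= n1+1, m2 <= n2+1
   (first conjunct), so they equal the finite sums in the second conjunct. *)
Theorem lemma2p7 (R : realFieldType) (a q t nu : R) :
  0 <= a -> a < 1 -> 0 < q -> q < 1 -> 0 < t -> t < 1 -> 0 < nu ->
  forall (i j : bool) (n1 n2 : nat),
    (forall m1 m2 : nat, (n1.+1 < m1)%N || (n2.+1 < m2)%N ->
       coefc q t nu m1 m2 * Zleft a q t nu i j m1 m2 n1 n2 = 0 /\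
       coefc q t nu m1 m2 * Zright a q t nu i j m1 m2 n1 n2 = 0) /\
    \sum_(m1 < n1.+2) \sum_(m2 < n2.+2)
       coefc q t nu m1 m2 * Zleft a q t nu i j m1 m2 n1 n2 =
    \sum_(m1 < n1.+2) \sum_(m2 < n2.+2)
       coefc q t nu m1 m2 * Zright a q t nu i j m1 m2 n1 n2.
Proof.
move=> _ _ q_gt0 q_lt1 t_gt0 _ nu_gt0 i j n1 n2; split.
  by move=> m1 m2 out; rewrite Zleft_out // Zright_out // mulr0.
have q_not_root n : q ^+ n.+1 != 1 by rewrite lt_eqF // exprn_ilt1 // ltW.
rewrite Zleft_factor Zright_factor.
by apply: boundary_exchange; rewrite // gt_eqF.
Qed.
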